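(* Let $1\leq s\leq\infty$ and $n\geq 2$. Let $\lambda$ be an arc of class $\mathcal{C}^s$ in $\mathbb{R}^n$ and let $\Omega$ be a neighborhood of $\lambda$. Then there is a simple closed curve $\gamma$ of class $\mathcal{C}^s$ in $\mathbb{R}^n$ that contains $\lambda$ and is contained in $\Omega$.
   Context: An arc of class $\mathcal{C}^s$ is the image of an injective $\mathcal{C}^s$ map of a closed interval with nowhere-vanishing derivative; a simple closed curve of class $\mathcal{C}^s$ is the image of an injective $\mathcal{C}^s$ map of the unit circle with nowhere-vanishing derivative. Neighborhoods are open. *)

From Stdlib Require Import Reals.
From Coquelicot Require Import Coquelicot.
From mathcomp Require Import ssreflect ssrbool fintype.
Open Scope R_scope.

Definition Eucl (n : nat) := 'I_n -> R.

Inductive smoothness := Fin (k : nat) | Inf.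

Definition smooth_ge1 (s : smoothness) : Prop :=
  match s with Fin k => (1 <= k)%nat | Inf => True end.

Definition Ck_real (k : nat) (f : R -> R) : Prop :=
  forall m : nat, (m <= k)%nat ->
    forall x : R, ex_derive_n f m x /\ continuous (Derive_n f m) x.

Definition Cs_real (s : smoothness) (f : R -> R) : Prop :=
  match s with
  | Fin k => Ck_real k f
  | Inf => forall k, Ck_real k f
  end.

Definition Cs_map {n : nat} (s : smoothness) (f : R -> Eucl n) : Prop :=
  forall i : 'I_n, Cs_real s (fun t => f t i).

Definition deriv_nonzero {n : nat} (f : R -> Eucl n) (t : R) : Prop :=
  exists i : 'I_n, Derive (fun u => f u i) t <> 0.

(* A C^s map on the closed interval is taken
   to be the restriction of a C^s map defined on R (equivalent by Whitney /
   Seeley extension). *)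
Definition is_arc {n : nat} (s : smoothness) (L : Eucl n -> Prop) : Prop :=
  exists f : R -> Eucl n,
    Cs_map s f /\
    (forall t1 t2, 0 <= t1 <= 1 -> 0 <= t2 <= 1 -> f t1 = f t2 -> t1 = t2) /\
    (forall t, 0 <= t <= 1 -> deriv_nonzero f t) /\
    (forall p, L p <-> exists t, 0 <= t <= 1 /\ p = f t).

(* A simple closed curve of class C^s: image of an injective C^s map of the
   unit circle with nowhere-vanishing derivative; maps of the circle
   R/Z are represented by 1-periodic maps R -> R^n, injective on [0,1). *)
Definition is_simple_closed_curve {n : nat} (s : smoothness) (G : Eucl n -> Prop)
  : Prop :=
  exists g : R -> Eucl n,
    Cs_map s g /\
    (forall t, g (t + 1) = g t) /\
    (forall t1 t2, 0 <= t1 < 1 -> 0 <= t2 < 1 -> g t1 = g t2 -> t1 = t2) /\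
    (forall t, deriv_nonzero g t) /\
    (forall p, G p <-> exists t, p = g t).

(* open subsets of R^n (Euclidean topology = product/sup-norm topology) *)
Definition open_Rn {n : nat} (O : Eucl n -> Prop) : Prop :=
  forall p, O p -> exists eps : R, 0 < eps /\
    forall q : Eucl n, (forall i, Rabs (q i - p i) < eps) -> O q.

Definition nbhd_of {n : nat} (O L : Eucl n -> Prop) : Prop :=
  open_Rn O /\ (forall p, L p -> O p).

(* Extend the parametrisation f of the arc slightly beyond [0,1] and choose a C^s vector
   field w along it that is uniformly transverse to f': in the plane a rotated difference
   quotient of f; in higher dimension a sum of bumps, each pointing on a short piece of the
   parameter interval along a coordinate in which f' is not dominant there, so that w
   vanishes in the dominant coordinate of f' and is bounded below in another one.
   Transversality makes (t, r) |-> f t + eps r w t injective and immersive on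
   [-eps, 1 + eps] x [0, 1] for small eps, with image in the neighbourhood. Running t back
   and forth through this strip along the loop th |-> (sweep th, lift th), at height r = 0
   on the way out and at positive height on the way back, gives the closed curve. The
   height is psi (sin (2 pi th) + eps / 4) with the flat function psi x = exp (-1/x)
   (x > 0), so it vanishes on the outgoing half, and where the sweep turns back its
   derivative is nonzero. *)

From Stdlib Require Import Reals.
From Coquelicot Require Import Coquelicot.
From mathcomp Require Import ssreflect ssrbool fintype.
From Stdlib Require Import Lra Lia Psatz FunctionalExtensionality Classical ClassicalEpsilon.
From mathcomp Require Import eqtype seq.
Open Scope R_scope.

(** * Functions of class C^k *)

(* A recursive form of [Ck_real] (see [Ck_realE]), for which the closure properties below
   follow by induction on k. *)
Fixpoint Ck (k : nat) (F : R -> R) : Prop :=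
  match k with
  | O => forall x, continuous F x
  | S k => (forall x, ex_derive F x) /\ Ck k (Derive F)
  end.

Lemma Ck_ext k F G : (forall x, F x = G x) -> Ck k F -> Ck k G.
Proof. by move=> /functional_extensionality <-. Qed.

Lemma Ck_continuous {k F} : Ck k F -> forall x, continuous F x.
Proof.
  case: k => [|k] /= HF x; first exact: HF.
  apply: ex_derive_continuous; exact: (proj1 HF).
Qed.

Lemma Ck_pred {k F} : Ck (S k) F -> Ck k F.
Proof.
  elim: k F => [|k IH] F HF; first exact: Ck_continuous HF.
  case: HF => HF1 HF2; split => //; exact: IH.
Qed.

Lemma Ck_le k m F : (m <= k)%nat -> Ck k F -> Ck m F.
Proof. elim=> // k' _ IH /Ck_pred; exact: IH. Qed.

Lemma Ck_const k c : Ck k (fun _ => c).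
Proof.
  elim: k c => [|k IH] c /=; first by move=> x; apply: continuous_const.
  split; first by move=> x; auto_derive.
  apply: Ck_ext (IH 0) => x; by rewrite Derive_const.
Qed.

Lemma Ck_id k : Ck k (fun x => x).
Proof.
  case: k => [|k] /=; first by move=> x; apply: continuous_id.
  split; first by move=> x; auto_derive.
  apply: Ck_ext (Ck_const k 1) => x; by rewrite Derive_id.
Qed.

Lemma Ck_plus k F G : Ck k F -> Ck k G -> Ck k (fun x => F x + G x).
Proof.
  elim: k F G => [|k IH] F G /= HF HG.
    by move=> x; apply: continuous_plus.
  case: HF HG => [HF1 HF2] [HG1 HG2]; split; first by move=> x; apply: ex_derive_plus.
  apply: Ck_ext (IH _ _ HF2 HG2) => x; by rewrite Derive_plus.
Qed.

Lemma Ck_mult k F G : Ck k F -> Ck k G -> Ck k (fun x => F x * G x).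
Proof.
  elim: k F G => [|k IH] F G HF HG.
    by move=> x; apply: continuous_mult; [apply: HF | apply: HG].
  have [HF' HG'] := conj (Ck_pred HF) (Ck_pred HG).
  case: HF HG => [HF1 HF2] [HG1 HG2]; split; first by move=> x; apply: ex_derive_mult.
  apply: (@Ck_ext _ (fun x => Derive F x * G x + F x * Derive G x)).
    by move=> x; rewrite Derive_mult.
  apply: Ck_plus; exact: IH.
Qed.

Lemma Ck_comp k F G : Ck k F -> Ck k G -> Ck k (fun x => F (G x)).
Proof.
  elim: k F G => [|k IH] F G HF HG.
    by move=> x; apply: continuous_comp; [apply: HG | apply: HF].
  have [HF' HG'] := conj (Ck_pred HF) (Ck_pred HG).
  case: HF HG => [HF1 HF2] [HG1 HG2]; split; first by move=> x; apply: ex_derive_comp.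
  apply: (@Ck_ext _ (fun x => Derive G x * Derive F (G x))).
    by move=> x; rewrite (Derive_comp F G x).
  apply: Ck_mult => //; exact: IH.
Qed.

Lemma Ck_scal k c F : Ck k F -> Ck k (fun x => c * F x).
Proof. exact/Ck_mult/Ck_const. Qed.

Lemma Ck_minus k F G : Ck k F -> Ck k G -> Ck k (fun x => F x - G x).
Proof.
  move=> HF HG; apply: (@Ck_ext _ (fun x => F x + (-1) * G x)) => [x|]; first ring.
  exact/Ck_plus/Ck_scal.
Qed.

Lemma Ck_sin_cos k : Ck k sin /\ Ck k cos.
Proof.
  elim: k => [|k [Hs Hc]] /=.
    by split=> x; apply/continuity_pt_filterlim; [apply: continuity_sin | apply: continuity_cos].
  split; split; try by move=> x; auto_derive.
  - apply: Ck_ext Hc => x; symmetry; exact/is_derive_unique/is_derive_sin.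
  - apply: (@Ck_ext _ (fun x => -1 * sin x)); last exact: Ck_scal.
    move=> x; rewrite (is_derive_unique _ _ _ (is_derive_cos x)); ring.
Qed.

Lemma Derive_n_Derive F m : Derive_n (Derive F) m = Derive_n F (S m).
Proof.
  apply: functional_extensionality => x.
  by rewrite (Derive_n_comp F m 1 x) Nat.add_1_r.
Qed.

Lemma ex_derive_n_Derive F m x :
  ex_derive_n (Derive F) (S m) x <-> ex_derive_n F (S (S m)) x.
Proof. by rewrite /= Derive_n_Derive. Qed.

Lemma Ck_realE k F : Ck_real k F <-> Ck k F.
Proof.
  elim: k F => [|k IH] F; split.
  - by move=> H x; case: (H 0%nat (le_n _) x).
  - move=> H m /Nat.le_0_r -> x; split => //; exact: H.
  - move=> H; split; first by move=> x; case: (H 1%nat ltac:(lia) x).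
    apply/IH => m Hm x; rewrite Derive_n_Derive.
    case: (H (S m) ltac:(lia) x) => Hd Hc; split => //.
    by case: m Hm Hd Hc => [|m] Hm Hd _ //; apply/ex_derive_n_Derive.
  - move=> HF; have [H1 /IH H2] := HF; case=> [|m] Hm x.
      by split => //; exact: (Ck_continuous HF x).
    rewrite -Derive_n_Derive; split; last by case: (H2 m ltac:(lia) x).
    case: m Hm => [|m] Hm; first exact: H1.
    by apply/ex_derive_n_Derive; case: (H2 (S m) ltac:(lia) x).
Qed.

Definition Cs (s : smoothness) (F : R -> R) : Prop :=
  match s with Fin k => Ck k F | Inf => forall k, Ck k F end.

Lemma Cs_realE s F : Cs_real s F <-> Cs s F.
Proof.
  case: s => [k|] /=; first exact: Ck_realE.
  by split=> H k; apply/Ck_realE.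
Qed.

Lemma Cs_smooth s F : (forall k, Ck k F) -> Cs s F.
Proof. by case: s => /=. Qed.

Lemma Cs_C1 {s F} : smooth_ge1 s -> Cs s F -> Ck 1 F.
Proof. case: s => [k|] /= Hs HF; [exact: (Ck_le _ _ _ Hs HF) | exact: (HF 1%nat)]. Qed.

Lemma Cs_const s c : Cs s (fun _ => c).
Proof. apply: Cs_smooth => k; exact: Ck_const. Qed.

Lemma Cs_id s : Cs s (fun x => x).
Proof. apply: Cs_smooth => k; exact: Ck_id. Qed.

Lemma Cs_plus {s F G} : Cs s F -> Cs s G -> Cs s (fun x => F x + G x).
Proof. case: s => /= *; auto using Ck_plus. Qed.

Lemma Cs_minus {s F G} : Cs s F -> Cs s G -> Cs s (fun x => F x - G x).
Proof. case: s => /= *; auto using Ck_minus. Qed.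

Lemma Cs_mult {s F G} : Cs s F -> Cs s G -> Cs s (fun x => F x * G x).
Proof. case: s => /= *; auto using Ck_mult. Qed.

Lemma Cs_scal {s} c {F} : Cs s F -> Cs s (fun x => c * F x).
Proof. case: s => /= *; auto using Ck_scal. Qed.

Lemma Cs_comp {s F G} : Cs s F -> Cs s G -> Cs s (fun x => F (G x)).
Proof. case: s => /= *; auto using Ck_comp. Qed.

(** * The flat function [exp (-1/x)] *)

Inductive is_poly : (R -> R) -> Prop :=
| is_poly_const c : is_poly (fun _ => c)
| is_poly_id : is_poly (fun y => y)
| is_poly_plus P Q : is_poly P -> is_poly Q -> is_poly (fun y => P y + Q y)
| is_poly_mult P Q : is_poly P -> is_poly Q -> is_poly (fun y => P y * Q y).

Lemma is_poly_derive {P} :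
  is_poly P -> exists P', is_poly P' /\ forall y, is_derive P y (P' y).
Proof.
  elim=> [c||{}P Q HP [P' [HP' DP]] HQ [Q' [HQ' DQ]]|{}P Q HP [P' [HP' DP]] HQ [Q' [HQ' DQ]]].
  - exists (fun _ => 0); split; [exact: is_poly_const | move=> y; exact: is_derive_const].
  - exists (fun _ => 1); split; [exact: is_poly_const | move=> y; exact: is_derive_id].
  - exists (fun y => P' y + Q' y); split; first exact: is_poly_plus.
    move=> y; exact: is_derive_plus.
  - exists (fun y => P' y * Q y + P y * Q' y); split.
      by apply: is_poly_plus; apply: is_poly_mult.
    move=> y; apply: (is_derive_mult P Q) => // a b; exact: Rmult_comm.
Qed.

Lemma is_poly_bound {P} :
  is_poly P -> exists C m, 0 <= C /\ forall y, 1 <= y -> Rabs (P y) <= C * y ^ m.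
Proof.
  elim=> [c||{}P Q _ [C1 [m1 [HC1 H1]]] _ [C2 [m2 [HC2 H2]]]
            |{}P Q _ [C1 [m1 [HC1 H1]]] _ [C2 [m2 [HC2 H2]]]].
  - exists (Rabs c), 0%nat; split; [exact: Rabs_pos | move=> y _ /=; lra].
  - by exists 1, 1%nat; split => [|y Hy /=]; [lra | rewrite Rabs_right; lra].
  - exists (C1 + C2), (m1 + m2)%nat; split => [|y Hy]; first lra.
    have E1 : y ^ m1 <= y ^ (m1 + m2) by apply: Rle_pow => //; lia.
    have E2 : y ^ m2 <= y ^ (m1 + m2) by apply: Rle_pow => //; lia.
    have := H1 y Hy; have := H2 y Hy; have := Rabs_triang (P y) (Q y); nra.
  - exists (C1 * C2), (m1 + m2)%nat; split => [|y Hy]; first nra.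
    rewrite Rabs_mult pow_add; have := H1 y Hy; have := H2 y Hy.
    have := Rabs_pos (P y); have := Rabs_pos (Q y); nra.
Qed.

Lemma pow_le_exp m y : 0 <= y -> y ^ m <= INR (Factorial.fact m) * exp y.
Proof.
  move=> Hy; have Hf : 0 < INR (Factorial.fact m) by apply/lt_0_INR/Factorial.lt_O_fact.
  suff : y ^ m / INR (Factorial.fact m) <= exp y.
    move=> H; have -> : y ^ m = INR (Factorial.fact m) * (y ^ m / INR (Factorial.fact m)).
      by field; lra.
    apply: Rmult_le_compat_l H; lra.
  apply: Rle_trans (exp_ge_taylor y m Hy).
  case: m Hf => [|m] Hf /=; first lra.
  suff : 0 <= sum_f_R0 (fun k => y ^ k / INR (Factorial.fact k)) m by lra.
  apply: cond_pos_sum => k; apply: Rdiv_le_0_compat; first exact: pow_le.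
  exact/lt_0_INR/Factorial.lt_O_fact.
Qed.

Definition poly_exp_inv (P : R -> R) (x : R) : R :=
  if Rlt_dec 0 x then P (/ x) * exp (- / x) else 0.

Lemma poly_exp_inv_pos P x : 0 < x -> poly_exp_inv P x = P (/ x) * exp (- / x).
Proof. by rewrite /poly_exp_inv; case: Rlt_dec. Qed.

Lemma poly_exp_inv_npos P x : x <= 0 -> poly_exp_inv P x = 0.
Proof. by move=> Hx; rewrite /poly_exp_inv; case: Rlt_dec => // H; lra. Qed.

Lemma poly_exp_inv_sq_bound {P} :
  is_poly P -> exists C, forall x, Rabs x <= 1 -> Rabs (poly_exp_inv P x) <= C * x ^ 2.
Proof.
  case/is_poly_bound => C [m [HC0 HC]].
  exists (C * INR (Factorial.fact (m + 2))) => x Hx.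
  have HK : 0 <= C * INR (Factorial.fact (m + 2)) by apply: Rmult_le_pos => //; exact: pos_INR.
  case: (Rle_lt_dec x 0) => [Hx0|Hx0].
    by rewrite poly_exp_inv_npos // Rabs_R0; apply: Rmult_le_pos => //; exact: pow2_ge_0.
  rewrite poly_exp_inv_pos // Rabs_mult (Rabs_right (exp _)); last exact/Rle_ge/Rlt_le/exp_pos.
  have Hy : 1 <= / x by rewrite Rabs_right in Hx; [rewrite -Rinv_1; apply: Rinv_le_contravar | ]; lra.
  have HP := HC _ Hy.
  have HE : (/ x) ^ m * exp (- / x) <= INR (Factorial.fact (m + 2)) * x ^ 2.
  { have := pow_le_exp (m + 2) (/ x) ltac:(lra); rewrite pow_add.
    have Hpos : 0 <= exp (- / x) * x ^ 2.
      by apply: Rmult_le_pos; [exact/Rlt_le/exp_pos | exact: pow2_ge_0].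
    move/(Rmult_le_compat_r _ _ _ Hpos).
    have -> : INR (Factorial.fact (m + 2)) * exp (/ x) * (exp (- / x) * x ^ 2)
              = INR (Factorial.fact (m + 2)) * x ^ 2 * (exp (/ x) * exp (- / x)) by ring.
    rewrite -exp_plus Rplus_opp_r exp_0.
    have -> : (/ x) ^ m * (/ x) ^ 2 * (exp (- / x) * x ^ 2) = (/ x) ^ m * exp (- / x).
      by field; lra.
    lra. }
  have := exp_pos (- / x); have := Rabs_pos (P (/ x)).
  have : 0 <= (/ x) ^ m by apply: pow_le; lra.
  nra.
Qed.

Lemma is_derive_sq_bound_0 (F : R -> R) C :
  F 0 = 0 -> (forall x, Rabs x <= 1 -> Rabs (F x) <= C * x ^ 2) -> is_derive F 0 0.
Proof.
  move=> F0 HF; apply/is_derive_Reals => eps Heps.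
  have HC : 0 <= C by have := HF 1; rewrite Rabs_R1 pow1; have := Rabs_pos (F 1); lra.
  have Hd : 0 < Rmin 1 (eps / (C + 1)) by apply: Rmin_pos; [lra | apply: Rdiv_lt_0_compat; lra].
  exists (mkposreal _ Hd) => h Hh /= Hhd.
  have Hh1 : Rabs h <= 1 by have := Rmin_l 1 (eps / (C + 1)); lra.
  have Hhe : (C + 1) * Rabs h < eps.
  { have : (C + 1) * Rabs h < (C + 1) * (eps / (C + 1)).
      by apply: Rmult_lt_compat_l; [lra | have := Rmin_r 1 (eps / (C + 1)); lra].
    by have -> : (C + 1) * (eps / (C + 1)) = eps by field; lra. }
  have Hh0 : 0 < Rabs h by exact: Rabs_pos_lt.
  rewrite Rplus_0_l F0 !Rminus_0_r /Rdiv Rabs_mult Rabs_inv.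
  have := HF h Hh1; rewrite -(pow2_abs h) => HFh.
  apply: (Rmult_lt_reg_r (Rabs h)) => //; rewrite Rmult_assoc Rinv_l; last lra.
  nra.
Qed.

Lemma is_derive_poly_exp_inv {P} :
  is_poly P -> exists Q, is_poly Q /\ forall x, is_derive (poly_exp_inv P) x (poly_exp_inv Q x).
Proof.
  move=> HP; case: (is_poly_derive HP) => P' [HP' DP].
  exists (fun y => y * y * (P y + (-1) * P' y)); split.
    exact: (is_poly_mult _ _ (is_poly_mult _ _ is_poly_id is_poly_id)
             (is_poly_plus _ _ HP (is_poly_mult _ _ (is_poly_const (-1)) HP'))).
  move=> x; case: (Rtotal_order x 0) => [Hx|[->|Hx]].
  - apply: (is_derive_ext_loc (fun _ => 0)); last first.
      by rewrite poly_exp_inv_npos; [exact: is_derive_const | lra].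
    exists (mkposreal _ (Ropp_0_gt_lt_contravar _ Hx)) => y /= /Rabs_lt_between' Hy.
    by rewrite poly_exp_inv_npos //; lra.
  - rewrite poly_exp_inv_npos; last lra.
    case: (poly_exp_inv_sq_bound HP) => C HC.
    by apply: is_derive_sq_bound_0 HC; rewrite poly_exp_inv_npos; lra.
  - apply: (is_derive_ext_loc (fun t => P (/ t) * exp (- / t))).
      exists (mkposreal _ Hx) => y /= /Rabs_lt_between' Hy.
      by rewrite poly_exp_inv_pos //; lra.
    have D1 : is_derive (fun t => P (/ t)) x (- / x ^ 2 * P' (/ x)).
      by apply: (is_derive_comp P (fun t => / t)) => //; auto_derive; [lra | field; lra].
    have D2 : is_derive (fun t => exp (- / t)) x (exp (- / x) * / x ^ 2).
      by auto_derive; [lra | field; lra].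
    have := is_derive_mult _ _ _ _ _ D1 D2 Rmult_comm.
    rewrite poly_exp_inv_pos // /plus /mult /=; rewrite /mult /=.
    by move=> H; apply: (eq_ind _ (is_derive _ x) H); rewrite /=; field; lra.
Qed.

Lemma poly_exp_inv_Ck k P : is_poly P -> Ck k (poly_exp_inv P).
Proof.
  elim: k P => [|k IH] P HP; case: (is_derive_poly_exp_inv HP) => Q [HQ DQ].
    by move=> x; apply: ex_derive_continuous; eexists; exact: DQ.
  split; first by move=> x; eexists; exact: DQ.
  apply: (@Ck_ext _ (poly_exp_inv Q)); last exact: IH.
  by move=> x; symmetry; apply: is_derive_unique.
Qed.

Definition psi : R -> R := poly_exp_inv (fun _ => 1).

Lemma psi_Ck k : Ck k psi.
Proof. exact/poly_exp_inv_Ck/is_poly_const. Qed.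

Lemma psi_npos x : x <= 0 -> psi x = 0.
Proof. exact: poly_exp_inv_npos. Qed.

Lemma psi_pos_eq x : 0 < x -> psi x = exp (- / x).
Proof. by move=> Hx; rewrite /psi poly_exp_inv_pos // Rmult_1_l. Qed.

Lemma psi_pos x : 0 < x -> 0 < psi x.
Proof. by move=> Hx; rewrite psi_pos_eq //; exact: exp_pos. Qed.

Lemma psi_neq0 x : psi x <> 0 -> 0 < x.
Proof. by move=> H; apply: Rnot_le_lt => Hx; apply/H/psi_npos. Qed.

Lemma psi_ge0 x : 0 <= psi x.
Proof.
  case: (Rle_lt_dec x 0) => Hx; first by rewrite psi_npos //; lra.
  exact/Rlt_le/psi_pos.
Qed.

Lemma psi_le1 x : psi x <= 1.
Proof.
  case: (Rle_lt_dec x 0) => Hx; first by rewrite psi_npos //; lra.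
  rewrite psi_pos_eq // -exp_0; apply/Rlt_le/exp_increasing.
  have := Rinv_0_lt_compat x Hx; lra.
Qed.

Lemma psi_lt x y : 0 < y -> x < y -> psi x < psi y.
Proof.
  move=> Hy Hxy; case: (Rle_lt_dec x 0) => Hx.
    by rewrite psi_npos //; exact: psi_pos.
  rewrite !psi_pos_eq //; apply: exp_increasing.
  have := Rinv_lt_contravar x y ltac:(nra) Hxy; lra.
Qed.

Lemma psi_le x y : x <= y -> psi x <= psi y.
Proof.
  move=> Hxy; case: (Rle_lt_dec y 0) => Hy; first by rewrite !psi_npos //; lra.
  case: (Req_dec x y) => [->|Hne]; first lra.
  apply/Rlt_le/psi_lt => //; lra.
Qed.

Lemma Derive_psi_pos x : 0 < x -> 0 < Derive psi x.
Proof.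
  move=> Hx.
  have D : is_derive psi x (exp (- / x) * / x ^ 2).
  { apply: (is_derive_ext_loc (fun t => exp (- / t))); last by auto_derive; [lra | field; lra].
    exists (mkposreal _ Hx) => y /= /Rabs_lt_between' Hy.
    by rewrite psi_pos_eq //; lra. }
  rewrite (is_derive_unique _ _ _ D); apply: Rmult_lt_0_compat; first exact: exp_pos.
  by apply/Rinv_0_lt_compat/pow_lt.
Qed.

(** * Uniform estimates near the unit interval *)

Definition near01 (d y : R) : Prop := - d < y < 1 + d.

Lemma near01_le {d y} d' : near01 d y -> d <= d' -> near01 d' y.
Proof. rewrite /near01; lra. Qed.

Lemma near01_uniform (Q : R -> R -> Prop) :
  (forall y e e', 0 < e' <= e -> Q y e -> Q y e') ->
  (forall t, 0 <= t <= 1 -> exists e, 0 < e /\ forall y, Rabs (y - t) < 2 * e -> Q y e) ->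
  exists d, 0 < d /\ forall y, near01 d y -> Q y d.
Proof.
  move=> Hmono Hloc.
  have Hpos t : exists e : posreal, 0 <= t <= 1 -> forall y, Rabs (y - t) < 2 * e -> Q y e.
  { case: (classic (0 <= t <= 1)) => Ht; last by exists (mkposreal 1 Rlt_0_1).
    by case: (Hloc t Ht) => e [He H]; exists (mkposreal e He). }
  have [delta Hdelta] := choice _ Hpos.
  case: (compactness_value_1d 0 1 delta) => d Hd.
  exists d; split => [|y Hy]; first exact: cond_pos.
  have [x [Hx Hyx]] : exists x, 0 <= x <= 1 /\ Rabs (y - x) < d.
  { have := cond_pos d; move: Hy; rewrite /near01 => Hy Hd0.
    case: (Rle_lt_dec y 0) => H0; first by exists 0; split; [lra | apply/Rabs_lt_between'; lra].
    case: (Rle_lt_dec y 1) => H1; first by exists y; split; [lra | apply/Rabs_lt_between'; lra].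
    by exists 1; split; [lra | apply/Rabs_lt_between'; lra]. }
  apply: NNPP => HnQ; apply: (Hd x Hx) => - [t [Ht [Hxt Hdt]]].
  apply/HnQ/(Hmono _ (delta t)); first by split; [exact: cond_pos | exact: Hdt].
  apply: Hdelta => //; have := Rabs_triang (y - x) (x - t).
  by rewrite (_ : y - x + (x - t) = y - t); [lra | ring].
Qed.

Lemma continuous_eps {F : R -> R} {x} : continuous F x ->
  forall eps, 0 < eps -> exists d, 0 < d /\ forall y, Rabs (y - x) < d -> Rabs (F y - F x) < eps.
Proof.
  move=> /continuity_pt_filterlim /continuity_pt_locally Hc eps Heps.
  by case: (Hc (mkposreal eps Heps)) => [[d Hd] H]; exists d; split => // y /H.
Qed.

Lemma MVT_Derive {F : R -> R} t u : (forall x, ex_derive F x) ->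
  exists c, Rmin t u <= c <= Rmax t u /\ F u - F t = Derive F c * (u - t).
Proof.
  move=> HF; apply: MVT_gen => x _; first exact: Derive_correct.
  exact/continuity_pt_filterlim/ex_derive_continuous.
Qed.

Lemma ex_pos_forall_ord {n} (P : 'I_n -> R -> Prop) :
  (forall i e e', 0 < e' <= e -> P i e -> P i e') ->
  (forall i, exists e, 0 < e /\ P i e) -> exists e, 0 < e /\ forall i, P i e.
Proof.
  move=> Hmono Hex.
  suff [e [He H]] : exists e, 0 < e /\ forall i, i \in enum 'I_n -> P i e.
    by exists e; split => // i; apply: H; rewrite mem_enum.
  elim: (enum 'I_n) => [|a l [e [He IH]]]; first by exists 1; split => //; lra.
  case: (Hex a) => ea [Hea Ha]; have Hm : 0 < Rmin e ea by exact: Rmin_pos.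
  exists (Rmin e ea); split => // i; rewrite in_cons => /orP [/eqP ->|Hi].
    by apply: (Hmono a ea) => //; split => //; exact: Rmin_r.
  by apply: (Hmono i e); [split => //; exact: Rmin_l | exact: IH].
Qed.

Definition vnorm {n} (x : Eucl n) : R :=
  foldr (fun i m => Rmax (Rabs (x i)) m) 0 (enum 'I_n).

Lemma vnorm_ge {n} (x : Eucl n) i : Rabs (x i) <= vnorm x.
Proof.
  have : i \in enum 'I_n by rewrite mem_enum.
  rewrite /vnorm; elim: (enum 'I_n) => [|a l IH] //=.
  rewrite in_cons => /orP [/eqP <-|/IH H]; first exact: Rmax_l.
  exact: Rle_trans H (Rmax_r _ _).
Qed.

Lemma vnorm_ge0 {n} (x : Eucl n) : 0 <= vnorm x.
Proof.
  rewrite /vnorm; elim: (enum 'I_n) => [|a l IH] /=; first lra.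
  exact: Rle_trans IH (Rmax_r _ _).
Qed.

Lemma vnorm_le {n} (x : Eucl n) c : 0 <= c -> (forall i, Rabs (x i) <= c) -> vnorm x <= c.
Proof.
  move=> Hc H; rewrite /vnorm; elim: (enum 'I_n) => [|a l IH] //=.
  exact: Rmax_lub.
Qed.

Lemma vnorm_lt {n} (x : Eucl n) c : 0 < c -> (forall i, Rabs (x i) < c) -> vnorm x < c.
Proof.
  move=> Hc H; rewrite /vnorm; elim: (enum 'I_n) => [|a l IH] //=.
  exact: Rmax_lub_lt.
Qed.

Lemma vnorm_scal {n} c (x : Eucl n) : vnorm (fun i => c * x i) = Rabs c * vnorm x.
Proof.
  rewrite /vnorm; elim: (enum 'I_n) => [|a l IH] /=; first ring.
  by rewrite IH Rabs_mult RmaxRmult //; exact: Rabs_pos.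
Qed.

Lemma vnorm_triangle {n} (x y : Eucl n) : vnorm (fun i => x i + y i) <= vnorm x + vnorm y.
Proof.
  apply: vnorm_le => [|i]; first by have := vnorm_ge0 x; have := vnorm_ge0 y; lra.
  have := Rabs_triang (x i) (y i); have := vnorm_ge x i; have := vnorm_ge y i; lra.
Qed.

Lemma vnorm_sub_sym {n} (x y : Eucl n) :
  vnorm (fun i => x i - y i) = vnorm (fun i => y i - x i).
Proof.
  rewrite -[RHS]Rmult_1_l -Rabs_R1 -Rabs_Ropp -vnorm_scal; congr vnorm.
  by apply: functional_extensionality => i; ring.
Qed.

Lemma vnorm_sub_triangle {n} (x y z : Eucl n) :
  vnorm (fun i => x i - z i) <= vnorm (fun i => x i - y i) + vnorm (fun i => y i - z i).
Proof.
  have := vnorm_triangle (fun i => x i - y i) (fun i => y i - z i).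
  by rewrite (_ : (fun i => _ + _) = fun i => x i - z i) //; apply: functional_extensionality => i; ring.
Qed.

Lemma vnorm_le_sub {n} (x y : Eucl n) : vnorm x <= vnorm (fun i => x i - y i) + vnorm y.
Proof.
  have := vnorm_triangle (fun i => x i - y i) y.
  by rewrite (_ : (fun i => _ + _) = x) //; apply: functional_extensionality => i; ring.
Qed.

Definition vderive {n} (F : R -> Eucl n) (t : R) : Eucl n := fun i => Derive (fun u => F u i) t.

Lemma vec_continuous_eps {n} {F : R -> Eucl n} :
  (forall i x, continuous (fun t => F t i) x) -> forall x eps, 0 < eps ->
  exists d, 0 < d /\ forall y, Rabs (y - x) < d -> vnorm (fun i => F y i - F x i) < eps.
Proof.
  move=> Hc x eps Heps.
  case: (ex_pos_forall_ord (fun i d => forall y, Rabs (y - x) < d -> Rabs (F y i - F x i) < eps)).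
  - by move=> i e e' He H y Hy; apply: H; lra.
  - by move=> i; exact: continuous_eps.
  - by move=> d [Hd H]; exists d; split => // y Hy; apply: vnorm_lt => // i; exact: H.
Qed.

Lemma near01_bounded {n} {F : R -> Eucl n} : (forall i x, continuous (fun t => F t i) x) ->
  exists d M, 0 < d /\ 0 < M /\ forall y, near01 d y -> vnorm (F y) <= M.
Proof.
  move=> Hc; case: (near01_uniform (fun y e => vnorm (F y) <= / e)).
  - move=> y e e' He H; apply: Rle_trans H _; apply: Rinv_le_contravar; lra.
  - move=> t _; case: (vec_continuous_eps Hc t 1 Rlt_0_1) => d0 [Hd0 H].
    have HFt := vnorm_ge0 (F t).
    have He : 0 < Rmin (d0 / 2) (/ (vnorm (F t) + 1)) by apply: Rmin_pos; [lra | apply: Rinv_0_lt_compat; lra].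
    exists (Rmin (d0 / 2) (/ (vnorm (F t) + 1))); split => // y Hy.
    have Hinv : vnorm (F t) + 1 <= / Rmin (d0 / 2) (/ (vnorm (F t) + 1)).
      by rewrite -{1}(Rinv_inv (vnorm (F t) + 1)); apply: Rinv_le_contravar => //; exact: Rmin_r.
    have := H y ltac:(have := Rmin_l (d0 / 2) (/ (vnorm (F t) + 1)); lra).
    have := vnorm_le_sub (F y) (F t); lra.
  - move=> d [Hd H]; exists d, (/ d); do 2 split => //; exact: Rinv_0_lt_compat.
Qed.

Lemma near01_unif_continuous {F : R -> R} : (forall x, continuous F x) ->
  forall eta, 0 < eta -> exists d, 0 < d /\
    forall y y', near01 d y -> Rabs (y' - y) < d -> Rabs (F y' - F y) < eta.
Proof.
  move=> Hc eta Heta.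
  case: (near01_uniform (fun y e => forall y', Rabs (y' - y) < e -> Rabs (F y' - F y) < eta)).
  - by move=> y e e' He H y' Hy'; apply: H; lra.
  - move=> t _; case: (continuous_eps (Hc t) (eta / 2)) => [|e0 [He0 H]]; first lra.
    exists (e0 / 3); split => [|y Hy y' Hy']; first lra.
    have Ay := H y ltac:(lra); rewrite Rabs_minus_sym in Ay.
    have Ay' := H y' ltac:(have := Rabs_triang (y' - y) (y - t);
                           rewrite (_ : y' - y + (y - t) = y' - t); [lra | ring]).
    have := Rabs_triang (F y' - F t) (F t - F y).
    by rewrite (_ : F y' - F t + (F t - F y) = F y' - F y); [lra | ring].
  - by move=> d [Hd H]; exists d; split => // y y' Hy; exact: H.
Qed.

Lemma near01_unif_derive (F : R -> R) : Ck 1 F -> forall eta, 0 < eta -> exists d, 0 < d /\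
  forall t u, near01 d t -> Rabs (u - t) < d ->
    Rabs (F u - F t - (u - t) * Derive F t) <= eta * Rabs (u - t).
Proof.
  case=> HF HF' eta Heta; case: (near01_unif_continuous HF' eta Heta) => d [Hd H].
  exists d; split => // t u Ht Hu; case: (MVT_Derive t u HF) => c [Hc ->].
  rewrite (_ : _ - _ = (Derive F c - Derive F t) * (u - t)); last ring.
  rewrite Rabs_mult; apply: Rmult_le_compat_r; first exact: Rabs_pos.
  apply/Rlt_le/H => //; rewrite Rmin_comm Rmax_comm in Hc.
  have := Rabs_le_between_min_max _ _ _ Hc; lra.
Qed.

Lemma near01_unif_vderive {n} {F : R -> Eucl n} : (forall i, Ck 1 (fun t => F t i)) ->
  forall eta, 0 < eta -> exists d, 0 < d /\ forall t u, near01 d t -> Rabs (u - t) < d ->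
    vnorm (fun i => F u i - F t i - (u - t) * vderive F t i) <= eta * Rabs (u - t).
Proof.
  move=> HF eta Heta.
  case: (ex_pos_forall_ord (fun i d => forall t u, near01 d t -> Rabs (u - t) < d ->
    Rabs (F u i - F t i - (u - t) * vderive F t i) <= eta * Rabs (u - t))).
  - by move=> i e e' He H t u Ht Hu; apply: H; [apply: (near01_le e Ht) | ]; lra.
  - by move=> i; exact: near01_unif_derive.
  - move=> d [Hd H]; exists d; split => // t u Ht Hu.
    apply: vnorm_le => [|i]; last exact: H.
    by apply: Rmult_le_pos; [lra | exact: Rabs_pos].
Qed.

Lemma near01_mvt_bound {n} {F : R -> Eucl n} {d M} : (forall i, Ck 1 (fun t => F t i)) ->
  (forall y, near01 d y -> vnorm (vderive F y) <= M) ->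
  forall t u, near01 d t -> near01 d u -> forall i, Rabs (F u i - F t i) <= M * Rabs (u - t).
Proof.
  move=> HF HM t u Ht Hu i; case: (MVT_Derive t u (proj1 (HF i))) => c [Hc ->].
  rewrite Rabs_mult; apply: Rmult_le_compat_r; first exact: Rabs_pos.
  apply: Rle_trans (vnorm_ge (vderive F c) i) (HM c _).
  move: Hc Ht Hu; rewrite /near01 /Rmin /Rmax; case: Rle_dec; lra.
Qed.

Lemma near01_dominant_coord {n} (v : R -> Eucl n) : (forall i x, continuous (fun t => v t i) x) ->
  (forall t, 0 <= t <= 1 -> exists i, v t i <> 0) ->
  exists d, 0 < d /\ forall y, near01 d y ->
    exists i, forall z, Rabs (z - y) < d -> d <= Rabs (v z i).
Proof.
  move=> Hc Hnz.
  apply: (near01_uniform (fun y e => exists i, forall z, Rabs (z - y) < e -> e <= Rabs (v z i))).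
    by move=> y e e' He [i H]; exists i => z Hz; have := H z ltac:(lra); lra.
  move=> t Ht; case: (Hnz t Ht) => i /Rabs_pos_lt Hi.
  case: (continuous_eps (Hc i t) (Rabs (v t i) / 2)) => [|e0 [He0 H]]; first lra.
  have Hm1 := Rmin_l (e0 / 3) (Rabs (v t i) / 2); have Hm2 := Rmin_r (e0 / 3) (Rabs (v t i) / 2).
  exists (Rmin (e0 / 3) (Rabs (v t i) / 2)); split; first by apply: Rmin_pos; lra.
  move=> y Hy; exists i => z Hz.
  have := H z ltac:(have := Rabs_triang (z - y) (y - t);
                    rewrite (_ : z - y + (y - t) = z - t); [lra | ring]).
  rewrite Rabs_minus_sym; have := Rabs_triang_inv (v t i) (v z i); lra.
Qed.

Lemma near01_tube_in_open {n} {F : R -> Eucl n} {O : Eucl n -> Prop} :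
  (forall i x, continuous (fun t => F t i) x) -> open_Rn O -> (forall t, 0 <= t <= 1 -> O (F t)) ->
  exists d, 0 < d /\ forall y, near01 d y -> forall q, vnorm (fun i => q i - F y i) < d -> O q.
Proof.
  move=> Hc HO HFO.
  apply: (near01_uniform (fun y e => forall q, vnorm (fun i => q i - F y i) < e -> O q)).
    by move=> y e e' He H q Hq; apply: H; lra.
  move=> t Ht; case: (HO _ (HFO t Ht)) => eps [Heps Hball].
  case: (vec_continuous_eps Hc t (eps / 2)) => [|e0 [He0 H]]; first lra.
  have Hm1 := Rmin_l (e0 / 2) (eps / 2); have Hm2 := Rmin_r (e0 / 2) (eps / 2).
  exists (Rmin (e0 / 2) (eps / 2)); split => [|y Hy q Hq]; first by apply: Rmin_pos; lra.
  apply: Hball => i; have := H y ltac:(lra).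
  have := vnorm_sub_triangle q (F y) (F t); have := vnorm_ge (fun i => q i - F t i) i; lra.
Qed.

Section Separation.
Variables (n : nat) (F : R -> Eucl n) (sigma : R).
Hypotheses (Hsigma : 0 < sigma) (Hc : forall i x, continuous (fun t => F t i) x)
  (Hinj : forall t1 t2, 0 <= t1 <= 1 -> 0 <= t2 <= 1 -> F t1 = F t2 -> t1 = t2).

Lemma near01_separated_from t0 : 0 <= t0 <= 1 ->
  exists mu, 0 < mu /\ forall u, near01 mu u -> sigma / 2 <= Rabs (u - t0) ->
    mu <= vnorm (fun i => F u i - F t0 i).
Proof.
  move=> Ht0.
  apply: (near01_uniform (fun u e => sigma / 2 <= Rabs (u - t0) ->
                                     e <= vnorm (fun i => F u i - F t0 i))).
    by move=> u e e' He H /H; lra.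
  move=> u0 Hu0; case: (Rlt_le_dec (Rabs (u0 - t0)) (sigma / 4)) => Hu.
    exists (sigma / 8); split => [|y Hy Hy']; first lra.
    by have := Rabs_triang (y - u0) (u0 - t0); rewrite (_ : y - u0 + _ = y - t0); [lra | ring].
  have [i Hi] : exists i, F u0 i <> F t0 i.
  { apply: NNPP => Hall; suff E : u0 = t0 by rewrite E Rminus_diag Rabs_R0 in Hu; lra.
    apply: Hinj => //; apply: functional_extensionality => i.
    by apply: NNPP => Hi; apply: Hall; exists i. }
  have Hpos : 0 < vnorm (fun i => F u0 i - F t0 i).
    by apply: Rlt_le_trans (vnorm_ge (fun i => F u0 i - F t0 i) i); apply: Rabs_pos_lt; lra.
  set c := vnorm (fun i => F u0 i - F t0 i) in Hpos *.
  case: (vec_continuous_eps Hc u0 (c / 2)) => [|e0 [He0 H]]; first lra.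
  have Hm1 := Rmin_l (e0 / 2) (c / 2); have Hm2 := Rmin_r (e0 / 2) (c / 2).
  exists (Rmin (e0 / 2) (c / 2)); split => [|y Hy _]; first by apply: Rmin_pos; lra.
  have := H y ltac:(lra); rewrite vnorm_sub_sym.
  have := vnorm_sub_triangle (F u0) (F y) (F t0); rewrite -/c; lra.
Qed.

Lemma near01_separated : exists d, 0 < d /\ forall t u, near01 d t -> near01 d u ->
  sigma <= Rabs (u - t) -> d <= vnorm (fun i => F u i - F t i).
Proof.
  case: (near01_uniform (fun t e => forall u, near01 e u -> sigma <= Rabs (u - t) ->
                                     e <= vnorm (fun i => F u i - F t i))).
  - move=> t e e' He H u Hu Hut; have := H u (near01_le e Hu (proj2 He)) Hut; lra.
  - move=> t0 Ht0; case: (near01_separated_from t0 Ht0) => mu [Hmu Hsep].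
    case: (vec_continuous_eps Hc t0 (mu / 2)) => [|e1 [He1 H]]; first lra.
    pose e := Rmin (sigma / 8) (Rmin (mu / 2) (e1 / 2)).
    have He : 0 < e /\ e <= sigma / 8 /\ e <= mu / 2 /\ e <= e1 / 2.
    { have := Rmin_l (sigma / 8) (Rmin (mu / 2) (e1 / 2)).
      have := Rmin_r (sigma / 8) (Rmin (mu / 2) (e1 / 2)).
      have := Rmin_l (mu / 2) (e1 / 2); have := Rmin_r (mu / 2) (e1 / 2).
      have : 0 < e by apply: Rmin_pos; [lra | apply: Rmin_pos; lra].
      rewrite /e; lra. }
    exists e; split => [|t Ht u Hu Hut]; first lra.
    have Hut0 : sigma / 2 <= Rabs (u - t0).
      have := Rabs_triang_inv (u - t) (t0 - t); rewrite Rabs_minus_sym in Ht.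
      by rewrite (_ : u - t - (t0 - t) = u - t0); [lra | ring].
    have A := Hsep u (near01_le mu Hu ltac:(lra)) Hut0.
    have B := H t ltac:(lra).
    have := vnorm_sub_triangle (F u) (F t) (F t0); lra.
  - by move=> d [Hd H]; exists d; split => // t u Ht Hu; exact: H.
Qed.

End Separation.

Arguments near01_separated {n F sigma}.

Lemma near01_lower_lipschitz {n} {f : R -> Eucl n} : (forall i, Ck 1 (fun t => f t i)) ->
  (forall t1 t2, 0 <= t1 <= 1 -> 0 <= t2 <= 1 -> f t1 = f t2 -> t1 = t2) ->
  (forall t, 0 <= t <= 1 -> deriv_nonzero f t) ->
  exists c d, 0 < c /\ 0 < d /\ forall t u, near01 d t -> near01 d u ->
    c * Rabs (u - t) <= vnorm (fun i => f u i - f t i).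
Proof.
  move=> Hf Hinj Hreg.
  have Hc i x : continuous (fun t => f t i) x by exact: Ck_continuous (Hf i) x.
  case: (near01_dominant_coord (vderive f) (fun i => proj2 (Hf i)) Hreg) => d1 [Hd1 Hdom].
  case: (near01_separated Hd1 Hc Hinj) => d3 [Hd3 Hsep].
  have Hc0 : 0 < Rmin d1 (d3 / 3) by apply: Rmin_pos; lra.
  have Hc1 := Rmin_l d1 (d3 / 3); have Hc2 := Rmin_r d1 (d3 / 3).
  have Hd := Rmin_l 1 (Rmin d1 d3); have Hd' := Rmin_r 1 (Rmin d1 d3).
  have Hd1' := Rmin_l d1 d3; have Hd3' := Rmin_r d1 d3.
  exists (Rmin d1 (d3 / 3)), (Rmin 1 (Rmin d1 d3)); do 2 split => //.
    by apply: Rmin_pos; [lra | exact: Rmin_pos].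
  move=> t u Ht Hu; have Hut := Rabs_pos (u - t).
  case: (Rlt_le_dec (Rabs (u - t)) d1) => Hclose.
  - case: (Hdom t (near01_le d1 Ht ltac:(lra))) => i Hi.
    case: (MVT_Derive t u (proj1 (Hf i))) => c [Hct Ec].
    rewrite Rmin_comm Rmax_comm in Hct.
    have Hdi := Hi c ltac:(have := Rabs_le_between_min_max _ _ _ Hct; lra).
    apply: (Rle_trans _ _ _ _ (vnorm_ge (fun i => f u i - f t i) i)); rewrite Ec Rabs_mult.
    by apply: Rmult_le_compat_r => //; rewrite /vderive in Hdi; lra.
  - have := Hsep t u (near01_le d3 Ht ltac:(lra)) (near01_le d3 Hu ltac:(lra)) Hclose.
    have : Rabs (u - t) <= 3 by move: Ht Hu; rewrite /near01 => Ht Hu; apply/Rabs_le_between'; lra.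
    nra.
Qed.

(** * A loop sweeping the parameter interval *)

Definition sweep (dl th : R) : R := 1 / 2 + (1 / 2 + dl) * cos (2 * PI * th).
Definition lift (dl th : R) : R := psi (sin (2 * PI * th) + dl / 2).

Lemma sweep_range dl th : 0 < dl -> - dl <= sweep dl th <= 1 + dl.
Proof. by move=> Hdl; rewrite /sweep; have := COS_bound (2 * PI * th); nra. Qed.

Lemma lift_range dl th : 0 <= lift dl th <= 1.
Proof. by split; [exact: psi_ge0 | exact: psi_le1]. Qed.

Lemma sweep_periodic dl th : sweep dl (th + 1) = sweep dl th.
Proof.
  rewrite /sweep (_ : 2 * PI * (th + 1) = 2 * PI * th + 2 * PI); last ring.
  by rewrite cos_plus cos_2PI sin_2PI Rmult_0_r Rmult_1_r Rminus_0_r.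
Qed.

Lemma lift_periodic dl th : lift dl (th + 1) = lift dl th.
Proof.
  rewrite /lift (_ : 2 * PI * (th + 1) = 2 * PI * th + 2 * PI); last ring.
  by rewrite sin_plus cos_2PI sin_2PI Rmult_0_r Rmult_1_r Rplus_0_r.
Qed.

Lemma sweep_Ck dl k : Ck k (sweep dl).
Proof.
  apply/Ck_plus/Ck_scal/Ck_comp; [exact: Ck_const | exact: (proj2 (Ck_sin_cos k))|].
  exact/Ck_scal/Ck_id.
Qed.

Lemma lift_Ck dl k : Ck k (lift dl).
Proof.
  apply/Ck_comp; first exact: psi_Ck.
  apply/Ck_plus/Ck_const/Ck_comp; first exact: (proj1 (Ck_sin_cos k)).
  exact/Ck_scal/Ck_id.
Qed.

Lemma sin_cos_inj x y : 0 <= x < 2 * PI -> 0 <= y < 2 * PI ->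
  sin x = sin y -> cos x = cos y -> x = y.
Proof.
  move=> Hx Hy Hs Hc.
  have H1 : cos (x - y) = 1 by rewrite cos_minus Hs Hc; have := sin2_cos2 y; rewrite /Rsqr; lra.
  have H2 : sin ((x - y) / 2) = 0.
    have := cos_2a_sin ((x - y) / 2).
    by rewrite (_ : 2 * ((x - y) / 2) = x - y); [rewrite H1; nra | field].
  case: (sin_eq_0_0 _ H2) => k Hk; have HP := PI_RGT_0.
  have [/lt_IZR Hk1 /lt_IZR Hk2] : -1 < IZR k < 1.
    by split; apply: (Rmult_lt_reg_r PI) => //; rewrite -Hk; lra.
  have Hk0 : k = 0%Z by lia.
  by rewrite Hk0 Rmult_0_l in Hk; lra.
Qed.

Lemma sweep_lift_inj dl th1 th2 : 0 < dl -> 0 <= th1 < 1 -> 0 <= th2 < 1 ->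
  sweep dl th1 = sweep dl th2 -> lift dl th1 = lift dl th2 -> th1 = th2.
Proof.
  move=> Hdl H1 H2 Ea Eb; have HP := PI_RGT_0.
  suff E : 2 * PI * th1 = 2 * PI * th2 by apply: (Rmult_eq_reg_l (2 * PI)); [exact: E | lra].
  have Hx : 0 <= 2 * PI * th1 < 2 * PI by nra.
  have Hy : 0 <= 2 * PI * th2 < 2 * PI by nra.
  rewrite /sweep /lift in Ea Eb; move: (2 * PI * th1) (2 * PI * th2) Hx Hy Ea Eb => x y Hx Hy Ea Eb.
  have Ec : cos x = cos y by apply: (Rmult_eq_reg_l (1 / 2 + dl)); lra.
  case: (Rle_lt_dec (sin x + dl / 2) 0) => Sx; case: (Rle_lt_dec (sin y + dl / 2) 0) => Sy.
  - have Px : PI < x by apply: Rnot_le_lt => Hle; have := sin_ge_0 x ltac:(lra) Hle; lra.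
    have Py : PI < y by apply: Rnot_le_lt => Hle; have := sin_ge_0 y ltac:(lra) Hle; lra.
    case: (Rtotal_order x y) => [Hl|[Ee|Hl]] //.
    + by have := cos_increasing_1 x y ltac:(lra) ltac:(lra) ltac:(lra) ltac:(lra) Hl; lra.
    + by have := cos_increasing_1 y x ltac:(lra) ltac:(lra) ltac:(lra) ltac:(lra) Hl; lra.
  - by rewrite psi_npos // in Eb; have := psi_pos _ Sy; lra.
  - by rewrite (psi_npos (sin y + dl / 2)) // in Eb; have := psi_pos _ Sx; lra.
  - apply: sin_cos_inj => //.
    case: (Rtotal_order (sin x) (sin y)) => [Hl|[Ee|Hl]] //.
    + by have := psi_lt (sin x + dl / 2) (sin y + dl / 2) Sy ltac:(lra); lra.
    + by have := psi_lt (sin y + dl / 2) (sin x + dl / 2) Sx ltac:(lra); lra.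
Qed.

Lemma is_derive_sweep dl th :
  is_derive (sweep dl) th (- (1 / 2 + dl) * (2 * PI) * sin (2 * PI * th)).
Proof. by rewrite /sweep; auto_derive => //; ring. Qed.

Lemma is_derive_lift dl th : is_derive (lift dl) th
  (Derive psi (sin (2 * PI * th) + dl / 2) * (2 * PI * cos (2 * PI * th))).
Proof.
  have D1 : is_derive (fun t => sin (2 * PI * t) + dl / 2) th (2 * PI * cos (2 * PI * th)).
    by auto_derive => //; ring.
  have D2 := Derive_correct _ _ (proj1 (psi_Ck 1) (sin (2 * PI * th) + dl / 2)).
  move: (is_derive_comp _ _ _ _ _ D2 D1) => H.
  by apply: (eq_ind _ (is_derive _ th) H); rewrite /scal /= /mult /=; ring.
Qed.

Lemma sweep_lift_regular dl th : 0 < dl ->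
  - (1 / 2 + dl) * (2 * PI) * sin (2 * PI * th) <> 0 \/
  Derive psi (sin (2 * PI * th) + dl / 2) * (2 * PI * cos (2 * PI * th)) <> 0.
Proof.
  move=> Hdl; have HP := PI_RGT_0.
  case: (Req_dec (sin (2 * PI * th)) 0) => Hs.
  - right; rewrite Hs Rplus_0_l.
    have Hc : cos (2 * PI * th) <> 0.
      by move=> Hc; have := sin2_cos2 (2 * PI * th); rewrite Hs Hc /Rsqr; lra.
    have := Derive_psi_pos (dl / 2) ltac:(lra).
    by move=> Hp; apply: Rmult_integral_contrapositive; split; [lra | apply: Rmult_integral_contrapositive; split; lra].
  - by left; apply: Rmult_integral_contrapositive; split => //; apply: Rmult_integral_contrapositive; split; lra.
Qed.

Lemma sweep_lift_cover dl t : 0 < dl <= 1 -> 0 <= t <= 1 ->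
  exists th, sweep dl th = t /\ lift dl th = 0.
Proof.
  move=> Hdl Ht; have HP := PI_RGT_0.
  pose c := (t - 1 / 2) / (1 / 2 + dl).
  have Hc2 : c * c <= 1 - dl / 2 * (dl / 2).
  { have Hu : 0 < (1 / 2 + dl) * (1 / 2 + dl) by nra.
    rewrite /c (_ : _ * _ = (t - 1 / 2) * (t - 1 / 2) / ((1 / 2 + dl) * (1 / 2 + dl))); last by field; lra.
    apply: (Rmult_le_reg_r ((1 / 2 + dl) * (1 / 2 + dl))) => //.
    rewrite /Rdiv Rmult_assoc Rinv_l; last lra.
    have : (t - 1 / 2) * (t - 1 / 2) <= 1 / 4 by nra.
    have : dl * dl <= dl by nra.
    have : dl * dl * dl <= dl * dl by nra.
    have : dl * dl * dl * dl <= dl * dl * dl by nra.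
    nra. }
  have Hc : -1 <= c <= 1 by nra.
  exists (- acos c / (2 * PI)).
  rewrite /sweep /lift (_ : 2 * PI * (- acos c / (2 * PI)) = - acos c); last by field; lra.
  rewrite cos_neg sin_neg cos_acos // sin_acos //; split; first by rewrite /c; field; lra.
  apply: psi_npos; suff : dl / 2 <= sqrt (1 - c²) by lra.
  rewrite -(sqrt_Rsqr (dl / 2)); last lra.
  by apply: sqrt_le_1_alt; rewrite /Rsqr; lra.
Qed.

(** * Transverse vector fields along the arc *)

Definition transverse_on {n} (f w : R -> Eucl n) (ka d : R) : Prop :=
  forall t, near01 d t -> forall al be,
    ka * Rabs al <= vnorm (fun i => al * vderive f t i + be * w t i) /\
    ka * Rabs be <= vnorm (fun i => al * vderive f t i + be * w t i).

Lemma rotation_lower_bound a b v0 v1 d M : 0 <= d -> d <= Rabs v0 \/ d <= Rabs v1 ->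
  Rabs (a * v0 - b * v1) <= M -> Rabs (a * v1 + b * v0) <= M ->
  d * Rabs a <= 2 * M /\ d * Rabs b <= 2 * M.
Proof.
  move=> Hd Hv H0 H1; have HM : 0 <= M by have := Rabs_pos (a * v0 - b * v1); lra.
  have Sq0 : (a * v0 - b * v1) ^ 2 <= M ^ 2.
    by rewrite -pow2_abs; apply: pow_incr; split => //; exact: Rabs_pos.
  have Sq1 : (a * v1 + b * v0) ^ 2 <= M ^ 2.
    by rewrite -pow2_abs; apply: pow_incr; split => //; exact: Rabs_pos.
  have Hvv : d ^ 2 <= v0 ^ 2 + v1 ^ 2.
    by case: Hv => Hv; have := pow_incr d _ 2 (conj Hd Hv); rewrite pow2_abs; nra.
  have Hab : (a ^ 2 + b ^ 2) * d ^ 2 <= 2 * M ^ 2.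
  { have : (a * v0 - b * v1) ^ 2 + (a * v1 + b * v0) ^ 2 = (a ^ 2 + b ^ 2) * (v0 ^ 2 + v1 ^ 2).
      by ring.
    have : 0 <= a ^ 2 + b ^ 2 by nra.
    nra. }
  have := Rabs_pos a; have := Rabs_pos b; rewrite -(pow2_abs a) -(pow2_abs b) in Hab.
  by split; nra.
Qed.

Lemma rotated_secant_bound a b v0 v1 s0 s1 d N : 0 < d -> d <= Rabs v0 \/ d <= Rabs v1 ->
  Rabs (s0 - v0) <= d / 4 -> Rabs (s1 - v1) <= d / 4 ->
  Rabs (a * v0 - b * s1) <= N -> Rabs (a * v1 + b * s0) <= N ->
  d / 4 * Rabs a <= N /\ d / 4 * Rabs b <= N.
Proof.
  move=> Hd Hv Hs0 Hs1 HN0 HN1; have HB := Rabs_pos b.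
  have Hbs : forall s v, Rabs (s - v) <= d / 4 -> Rabs (b * (s - v)) <= Rabs b * (d / 4).
    by move=> s v Hs; rewrite Rabs_mult; apply: Rmult_le_compat_l.
  have [] := rotation_lower_bound a b v0 v1 d (N + Rabs b * (d / 4)) ltac:(lra) Hv.
  - have := Rabs_triang (a * v0 - b * s1) (b * (s1 - v1)); have := Hbs _ _ Hs1.
    by rewrite (_ : a * v0 - b * s1 + b * (s1 - v1) = a * v0 - b * v1); [lra | ring].
  - have := Rabs_triang (a * v1 + b * s0) (- (b * (s0 - v0))); have := Hbs _ _ Hs0.
    by rewrite Rabs_Ropp (_ : a * v1 + b * s0 + - (b * (s0 - v0)) = a * v1 + b * v0); [lra | ring].
  - lra.
Qed.

Lemma Cs_secant s F h c : Cs s F -> Cs s (fun t => c * (F (t + h) - F t)).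
Proof.
  move=> HF; apply/Cs_scal/Cs_minus => //.
  exact: Cs_comp HF (Cs_plus (Cs_id s) (Cs_const s h)).
Qed.

Lemma ord2_cases (i : 'I_2) : i = ord0 \/ i = ord_max.
Proof. by case: i => [[|[|m]] Hm]; [left | right |]; try apply: ord_inj. Qed.

Lemma plane_transverse_field s (f : R -> Eucl 2) : smooth_ge1 s ->
  (forall i, Cs s (fun t => f t i)) -> (forall t, 0 <= t <= 1 -> deriv_nonzero f t) ->
  exists w ka d, (forall i, Cs s (fun t => w t i)) /\ 0 < ka /\ 0 < d /\ transverse_on f w ka d.
Proof.
  move=> Hs Hf Hreg; have Hf1 i := Cs_C1 Hs (Hf i).
  case: (near01_dominant_coord (vderive f) (fun i => proj2 (Hf1 i)) Hreg) => d1 [Hd1 Hdom].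
  case: (near01_unif_vderive Hf1 (d1 / 4)) => [|dA [HdA Happrox]]; first lra.
  pose h := dA / 2; have Hh : 0 < h by rewrite /h; lra.
  (* [f'] is only of class C^(s-1), so we rotate a difference quotient of [f] instead. *)
  pose w t (i : 'I_2) := if i == ord0 then - / h * (f (t + h) ord_max - f t ord_max)
                         else / h * (f (t + h) ord0 - f t ord0).
  exists w, (d1 / 4), (Rmin d1 dA); split.
    by move=> i; rewrite /w; case: (i == ord0); apply: Cs_secant.
  split; first lra; split; first exact: Rmin_pos.
  move=> t Ht al be.
  have Ht1 : near01 d1 t by apply: (near01_le d1 Ht); exact: Rmin_l.
  have HtA : near01 dA t by apply: (near01_le dA Ht); exact: Rmin_r.
  have Hsec j : Rabs (/ h * (f (t + h) j - f t j) - vderive f t j) <= d1 / 4.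
  { have := Happrox t (t + h) HtA; rewrite (_ : t + h - t = h); last ring.
    rewrite Rabs_right; last lra; move/(_ ltac:(rewrite /h; lra)).
    move/(Rle_trans _ _ _ (vnorm_ge _ j)).
    rewrite (_ : _ - _ - _ = h * (/ h * (f (t + h) j - f t j) - vderive f t j)); last by field; lra.
    by rewrite Rabs_mult Rabs_right; [move=> H; nra | lra]. }
  have Hv : d1 <= Rabs (vderive f t ord0) \/ d1 <= Rabs (vderive f t ord_max).
    case: (Hdom t Ht1) => i /(_ t); rewrite Rminus_diag Rabs_R0 => /(_ Hd1) Hi.
    by case: (ord2_cases i) => Ei; rewrite Ei in Hi; [left | right].
  apply: (rotated_secant_bound _ _ _ _ _ _ _ _ Hd1 Hv (Hsec ord0) (Hsec ord_max)).
  - apply: Rle_trans (vnorm_ge _ ord0); rewrite /w /=; right; congr Rabs; ring.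
  - apply: Rle_trans (vnorm_ge _ ord_max); rewrite /w /=; right; congr Rabs; ring.
Qed.

Lemma exists_third_ord {n} (a b : 'I_(S (S (S n)))) : exists c : 'I_(S (S (S n))), c <> a /\ c <> b.
Proof.
  have [k [Hk [Hka Hkb]]] : exists k, (k < 3)%nat /\ k <> val a /\ k <> val b.
  { apply: NNPP => H.
    have Hk k : (k < 3)%nat -> k = val a \/ k = val b.
      move=> Hk; apply: NNPP => Hn; apply: H; exists k.
      by split; last (split => E; apply: Hn; [left | right]).
    by case: (Hk 0%nat); [lia|..]; case: (Hk 1%nat); [lia|..]; case: (Hk 2%nat); [lia|..]; lia. }
  have Hkn : ssrnat.leq (S k) (S (S (S n))) by apply/ssrnat.leP; lia.
  by exists (Ordinal Hkn); split => E; [apply: Hka | apply: Hkb]; rewrite -E.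
Qed.

Definition window (a b t : R) : R := psi (t - a) * psi (b - t).

Lemma window_Cs s a b : Cs s (window a b).
Proof.
  apply: Cs_mult; apply: Cs_comp; try by apply: Cs_smooth => k; exact: psi_Ck.
  - exact: Cs_minus (Cs_id s) (Cs_const s a).
  - exact: Cs_minus (Cs_const s b) (Cs_id s).
Qed.

Lemma window_ge0 a b t : 0 <= window a b t.
Proof. by apply: Rmult_le_pos; exact: psi_ge0. Qed.

Lemma window_neq0 a b t : window a b t <> 0 -> a < t < b.
Proof.
  rewrite /window => H; split.
  - by have := @psi_neq0 (t - a) (fun E => H ltac:(rewrite E; ring)); lra.
  - by have := @psi_neq0 (b - t) (fun E => H ltac:(rewrite E; ring)); lra.
Qed.

Lemma window_ge a b e t : a + e <= t <= b - e -> psi e * psi e <= window a b t.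
Proof.
  move=> Ht; apply: Rmult_le_compat; try exact: psi_ge0; apply: psi_le; lra.
Qed.

Definition bump_field {n} (j : nat -> 'I_n) (beta : nat -> R -> R) (N : nat) (t : R) (k : 'I_n) : R :=
  sum_f_R0 (fun m => if j m == k then beta m t else 0) N.

Lemma bump_field_Cs s {n} (j : nat -> 'I_n) beta N k :
  (forall m, Cs s (beta m)) -> Cs s (fun t => bump_field j beta N t k).
Proof.
  move=> Hbeta; have Hterm m : Cs s (fun t => if j m == k then beta m t else 0).
    by case: (j m == k); [exact: Hbeta | exact: Cs_const].
  by elim: N => [|N IH] /=; [exact: Hterm | exact: Cs_plus].
Qed.

Lemma bump_field_eq0 {n} (j : nat -> 'I_n) beta N t k :
  (forall m, (m <= N)%nat -> beta m t <> 0 -> j m <> k) -> bump_field j beta N t k = 0.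
Proof.
  move=> H; apply: sum_eq_R0 => m Hm; case: eqP => // E.
  by apply: NNPP => Hb; exact: H m Hm Hb E.
Qed.

Lemma bump_field_ge {n} (j : nat -> 'I_n) beta N t m :
  (forall m, 0 <= beta m t) -> (m <= N)%nat -> beta m t <= bump_field j beta N t (j m).
Proof.
  move=> Hpos; rewrite /bump_field.
  have Hterm m' k : 0 <= (if j m' == k then beta m' t else 0) by case: (_ == _) => //; lra.
  elim: N => [|N IH] Hm /=.
    by rewrite (_ : m = 0%nat) ?eqxx; [lra | lia].
  case: (Nat.eq_dec m (S N)) => [->|Hne]; last by have := IH ltac:(lia); have := Hterm (S N) (j m); lra.
  by rewrite eqxx; have := cond_pos_sum _ N (fun m' => Hterm m' (j (S N))); lra.
Qed.

Definition grid (h : R) (m : nat) : R := (INR m - 1) * h.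

Lemma grid_S h m : grid h (S m) = grid h m + h.
Proof. by rewrite /grid S_INR; ring. Qed.

Lemma exists_grid_piece h N t : 0 < h -> grid h 0 <= t <= grid h (S N) ->
  exists m, (m <= N)%nat /\ grid h m <= t <= grid h (S m).
Proof.
  move=> Hh; elim: N => [|N IH] Ht; first by exists 0%nat.
  case: (Rle_lt_dec t (grid h (S N))) => Htn.
    by case: (IH ltac:(lra)) => m [Hm Hmt]; exists m; split => //; lia.
  by exists (S N); split => //; lra.
Qed.

Lemma grid_index {h p m t} : 0 < h -> Rabs (t - grid h p) <= h / 2 ->
  grid h m - h / 4 < t < grid h (S m) + h / 4 -> p = m \/ p = S m.
Proof.
  move=> Hh /Rabs_le_between' Hp; rewrite grid_S => Hm.
  have Hlt : INR m < INR p + 1 /\ INR p < INR m + 2.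
    by rewrite /grid in Hp Hm; split; apply: (Rmult_lt_reg_r h) => //; lra.
  rewrite -S_INR (_ : INR m + 2 = INR (S (S m))) in Hlt; last by rewrite !S_INR; ring.
  by case: Hlt => /INR_lt H1 /INR_lt H2; lia.
Qed.

Lemma transverse_coord_bound a b vi vj wj d V om N : 0 < d -> 0 < om -> 0 <= V ->
  d <= Rabs vi -> om <= wj -> Rabs vj <= V ->
  Rabs (a * vi) <= N -> Rabs (a * vj + b * wj) <= N ->
  Rmin d (om * d / (d + V)) * Rabs a <= N /\ Rmin d (om * d / (d + V)) * Rabs b <= N.
Proof.
  move=> Hd Hom HV Hvi Hwj Hvj HN1 HN2.
  have Hk1 := Rmin_l d (om * d / (d + V)); have Hk2 := Rmin_r d (om * d / (d + V)).
  have HA := Rabs_pos a; have HB := Rabs_pos b.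
  have E1 : d * Rabs a <= N by rewrite Rabs_mult in HN1; nra.
  split; first nra.
  have E2 : Rabs b * om - Rabs a * V <= N.
  { have := Rabs_triang_inv (b * wj) (- (a * vj)); rewrite Rabs_Ropp !Rabs_mult (Rabs_right wj); last lra.
    rewrite (_ : b * wj - - (a * vj) = a * vj + b * wj); last ring.
    have : Rabs a * Rabs vj <= Rabs a * V by apply: Rmult_le_compat_l.
    have : Rabs b * om <= Rabs b * wj by apply: Rmult_le_compat_l.
    lra. }
  have : Rabs b * (om * d / (d + V)) <= N.
  { apply: (Rmult_le_reg_r (d + V)); first lra.
    rewrite (_ : Rabs b * (om * d / (d + V)) * (d + V) = Rabs b * om * d); last by field; lra.
    nra. }
  nra.
Qed.

Section HigherDimension.
Variables (n : nat) (f : R -> Eucl (S (S (S n)))) (d V : R).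
Hypotheses (Hd : 0 < d) (HV : 0 <= V)
  (Hdom : forall y, near01 d y -> exists i, forall z, Rabs (z - y) < d -> d <= Rabs (vderive f z i))
  (Hbound : forall y, near01 d y -> vnorm (vderive f y) <= V).

Let h := d / 4.

Lemma dom_coord_ex m : exists i, near01 d (grid h m) ->
  forall z, Rabs (z - grid h m) < d -> d <= Rabs (vderive f z i).
Proof.
  case: (classic (near01 d (grid h m))) => [/Hdom [i Hi]|Hn]; first by exists i.
  by exists ord0.
Qed.

Definition dom_coord m : 'I_(S (S (S n))) := proj1_sig (constructive_indefinite_description _ (dom_coord_ex m)).

Lemma dom_coordP m : near01 d (grid h m) ->
  forall z, Rabs (z - grid h m) < d -> d <= Rabs (vderive f z (dom_coord m)).
Proof. exact: proj2_sig (constructive_indefinite_description _ (dom_coord_ex m)). Qed.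

Definition free_coord m : 'I_(S (S (S n))) :=
  proj1_sig (constructive_indefinite_description _ (exists_third_ord (dom_coord m) (dom_coord (S m)))).

Lemma free_coordP m : free_coord m <> dom_coord m /\ free_coord m <> dom_coord (S m).
Proof. exact: proj2_sig (constructive_indefinite_description _ (exists_third_ord _ _)). Qed.

Definition piece_bump m := window (grid h m - h / 4) (grid h (S m) + h / 4).

Definition higher_field N t := bump_field free_coord piece_bump N t.

Lemma higher_field_Cs s N k : Cs s (fun t => higher_field N t k).
Proof. by apply: bump_field_Cs => m; exact: window_Cs. Qed.

Lemma higher_field_transverse N : 1 + h <= grid h N ->
  transverse_on f (higher_field N) (Rmin d (psi (h / 4) * psi (h / 4) * d / (d + V))) (h / 2).
Proof.
  move=> HN t Ht al be; have Hhd : h = d / 4 by [].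
  have Hh : 0 < h by lra.
  have Hom : 0 < psi (h / 4) * psi (h / 4) by have := psi_pos (h / 4) ltac:(lra); nra.
  have [ms [Hms Hpiece]] : exists ms, (ms <= N)%nat /\ grid h ms <= t <= grid h (S ms).
    have G0 : grid h 0 = - h by rewrite /grid /=; ring.
    by apply: exists_grid_piece => //; rewrite G0 grid_S; move: Ht; rewrite /near01; lra.
  have [p Hp] : exists p, Rabs (t - grid h p) <= h / 2 /\ (p = ms \/ p = S ms).
  { rewrite grid_S in Hpiece; case: (Rle_lt_dec t (grid h ms + h / 2)) => Hhalf.
    - by exists ms; split; [apply/Rabs_le_between'; lra | left].
    - by exists (S ms); rewrite grid_S; split; [apply/Rabs_le_between'; lra | right]. }
  case: Hp => /[dup] /Rabs_le_between' Htp Htp' Hp.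
  have Hdomt : d <= Rabs (vderive f t (dom_coord p)).
    by apply: dom_coordP; [move: Ht; rewrite /near01; lra | lra].
  have Hzero : higher_field N t (dom_coord p) = 0.
  { apply: bump_field_eq0 => m _ /window_neq0 Hm.
    case: (grid_index Hh Htp' Hm) => ->; exact: (proj1 (free_coordP m)) || exact: (proj2 (free_coordP m)). }
  have Hfree : psi (h / 4) * psi (h / 4) <= higher_field N t (free_coord ms).
    apply: Rle_trans (bump_field_ge _ _ _ _ _ (fun m => window_ge0 _ _ t) Hms).
    by apply: window_ge; rewrite grid_S in Hpiece |- *; lra.
  apply: (transverse_coord_bound al be (vderive f t (dom_coord p)) (vderive f t (free_coord ms))
           (higher_field N t (free_coord ms))) => //.
  - by apply: Rle_trans (vnorm_ge (vderive f t) _) (Hbound t _); move: Ht; rewrite /near01; lra.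
  - have := vnorm_ge (fun i => al * vderive f t i + be * higher_field N t i) (dom_coord p).
    by rewrite Hzero Rmult_0_r Rplus_0_r.
  - exact: (vnorm_ge (fun i => al * vderive f t i + be * higher_field N t i)).
Qed.

End HigherDimension.

Lemma higher_transverse_field s n (f : R -> Eucl (S (S (S n)))) : smooth_ge1 s ->
  (forall i, Cs s (fun t => f t i)) -> (forall t, 0 <= t <= 1 -> deriv_nonzero f t) ->
  exists w ka d, (forall i, Cs s (fun t => w t i)) /\ 0 < ka /\ 0 < d /\ transverse_on f w ka d.
Proof.
  move=> Hs Hf Hreg; have Hf' i x := proj2 (Cs_C1 Hs (Hf i)) x.
  case: (near01_dominant_coord (vderive f) Hf' Hreg) => d1 [Hd1 Hdom].
  case: (near01_bounded Hf') => dV [V [HdV [HV Hbound]]].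
  have Hm1 := Rmin_l d1 dV; have Hm2 := Rmin_r d1 dV.
  have Hd : 0 < Rmin d1 dV by exact: Rmin_pos.
  set d := Rmin d1 dV in Hd Hm1 Hm2.
  have Hdom' y : near01 d y -> exists i, forall z, Rabs (z - y) < d -> d <= Rabs (vderive f z i).
    move=> Hy; case: (Hdom y (near01_le d1 Hy Hm1)) => i Hi.
    by exists i => z Hz; have := Hi z ltac:(lra); lra.
  have Hbound' y : near01 d y -> vnorm (vderive f y) <= V by move=> Hy; exact/Hbound/(near01_le dV Hy).
  case: (INR_unbounded ((1 + d / 4) / (d / 4) + 1)) => N HN.
  have HgN : 1 + d / 4 <= grid (d / 4) N.
    rewrite /grid; apply: Rlt_le; apply: (Rmult_lt_reg_r (/ (d / 4))); first by apply: Rinv_0_lt_compat; lra.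
    rewrite Rmult_assoc Rinv_r; [lra | lra].
  have Hom : 0 < psi (d / 4 / 4) * psi (d / 4 / 4) by have := psi_pos (d / 4 / 4) ltac:(lra); nra.
  exists (higher_field n f d Hdom' N), (Rmin d (psi (d / 4 / 4) * psi (d / 4 / 4) * d / (d + V))),
    (d / 4 / 2); split; first exact: higher_field_Cs.
  split; first by apply: Rmin_pos => //; apply: Rdiv_lt_0_compat; nra.
  split; first lra.
  exact: (higher_field_transverse n f d V Hd (Rlt_le _ _ HV) Hdom' Hbound' N HgN).
Qed.

Lemma at_right_0_of (P : R -> Prop) D : 0 < D -> (forall d, 0 < d <= D -> P d) -> at_right 0 P.
Proof.
  move=> HD H; exists (mkposreal D HD) => d Hd Hd0; apply: H; split => //.
  move: Hd; rewrite /ball /= /AbsRing_ball /abs /minus /plus /opp /= => /Rabs_lt_between; lra.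
Qed.

Lemma transverse_on_eq0 {n} {f w : R -> Eucl n} {ka d t al be} : 0 < ka ->
  transverse_on f w ka d -> near01 d t ->
  vnorm (fun i => al * vderive f t i + be * w t i) <= ka / 2 * Rabs al -> al = 0 /\ be = 0.
Proof.
  move=> Hka Htr Ht Hsmall; case: (Htr t Ht al be) => Hal Hbe.
  have Hal0 : Rabs al = 0 by have := Rabs_pos al; nra.
  split; first exact: Rabs_eq_0.
  by apply: Rabs_eq_0; have := Rabs_pos be; rewrite Hal0 Rmult_0_r in Hsmall; nra.
Qed.

Lemma at_right_0_le {X} : 0 < X -> at_right 0 (fun e => 0 < e <= X).
Proof. by move=> HX; apply: (at_right_0_of _ X). Qed.

Lemma Rabs_scal_le {eps r x W} : 0 <= eps -> 0 <= r <= 1 -> Rabs x <= W ->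
  Rabs (eps * r * x) <= eps * W.
Proof.
  move=> He Hr Hx; rewrite !Rabs_mult (Rabs_pos_eq eps) // (Rabs_pos_eq r); last lra.
  rewrite Rmult_assoc; apply: Rmult_le_compat_l => //; have := Rabs_pos x; nra.
Qed.

(** * Pushing the arc off along a transverse field *)

Section Pushoff.
Variables (s : smoothness) (n : nat) (f w : R -> Eucl n) (ka d0 : R).
Hypotheses (Hs : smooth_ge1 s) (Hf : forall i, Cs s (fun t => f t i))
  (Hw : forall i, Cs s (fun t => w t i)) (Hka : 0 < ka) (Hd0 : 0 < d0)
  (Htr : transverse_on f w ka d0).

Let Hf1 i : Ck 1 (fun t => f t i) := Cs_C1 Hs (Hf i).
Let Hw1 i : Ck 1 (fun t => w t i) := Cs_C1 Hs (Hw i).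

Definition pushoff (eps r t : R) : Eucl n := fun i => f t i + eps * r * w t i.

Lemma pushoff_Cs eps (a b : R -> R) i : Cs s a -> Cs s b ->
  Cs s (fun th => pushoff eps (b th) (a th) i).
Proof.
  move=> Ha Hb; apply: Cs_plus; first exact: Cs_comp (Hf i) Ha.
  by apply: Cs_mult; [exact: Cs_scal | exact: Cs_comp (Hw i) Ha].
Qed.

Lemma is_derive_pushoff eps {a b : R -> R} {a' b' th} i :
  is_derive a th a' -> is_derive b th b' ->
  is_derive (fun th => pushoff eps (b th) (a th) i) th
    (a' * vderive f (a th) i + eps * (b' * w (a th) i + b th * (a' * vderive w (a th) i))).
Proof.
  move=> Da Db.
  have Dw := is_derive_comp (fun x => w x i) a th _ _ (Derive_correct _ _ (proj1 (Hw1 i) (a th))) Da.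
  have Df := is_derive_comp (fun x => f x i) a th _ _ (Derive_correct _ _ (proj1 (Hf1 i) (a th))) Da.
  have Dbw := is_derive_mult _ _ _ _ _ (is_derive_scal _ _ eps _ Db) Dw Rmult_comm.
  move: (is_derive_plus _ _ _ _ _ Df Dbw) => H.
  by apply: (eq_ind _ (is_derive _ th) H); rewrite /plus /scal /mult /= /mult /= /vderive; ring.
Qed.

Lemma w_bounded : exists dW W W', 0 < dW /\ 0 < W /\ 0 < W' /\
  forall y, near01 dW y -> vnorm (w y) <= W /\ vnorm (vderive w y) <= W'.
Proof.
  case: (near01_bounded (fun i x => Ck_continuous (Hw1 i) x)) => d [W [Hd [HW HbW]]].
  case: (near01_bounded (fun i => proj2 (Hw1 i))) => d' [W' [Hd' [HW' HbW']]].
  exists (Rmin d d'), W, W'; split; first exact: Rmin_pos.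
  do 2 (split => //).
  move=> y Hy; split; [apply: HbW | apply: HbW']; apply: (near01_le _ Hy).
  - exact: Rmin_l.
  - exact: Rmin_r.
Qed.

Lemma pushoff_eq_base_close {eps W t u r r'} : 0 <= eps -> 0 <= r <= 1 -> 0 <= r' <= 1 ->
  vnorm (w t) <= W -> vnorm (w u) <= W -> pushoff eps r t = pushoff eps r' u ->
  vnorm (fun i => f u i - f t i) <= 2 * eps * W.
Proof.
  move=> He Hr Hr' Hwt Hwu E; apply: vnorm_le => [|i].
    by have := vnorm_ge0 (w t); nra.
  have := f_equal (fun p => p i) E; rewrite /pushoff /= => Ei.
  rewrite (_ : f u i - f t i = eps * r * w t i + - (eps * r' * w u i)); last lra.
  have := Rabs_triang (eps * r * w t i) (- (eps * r' * w u i)); rewrite Rabs_Ropp.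
  have := Rabs_scal_le He Hr (Rle_trans _ _ _ (vnorm_ge (w t) i) Hwt).
  have := Rabs_scal_le He Hr' (Rle_trans _ _ _ (vnorm_ge (w u) i) Hwu).
  lra.
Qed.

Lemma pushoff_injective_near :
  (forall t1 t2, 0 <= t1 <= 1 -> 0 <= t2 <= 1 -> f t1 = f t2 -> t1 = t2) ->
  (forall t, 0 <= t <= 1 -> deriv_nonzero f t) ->
  at_right 0 (fun eps => forall t u r r', near01 eps t -> near01 eps u ->
    0 <= r <= 1 -> 0 <= r' <= 1 -> pushoff eps r t = pushoff eps r' u -> t = u /\ r = r').
Proof.
  move=> Hinj Hreg.
  case: (near01_lower_lipschitz Hf1 Hinj Hreg) => c [dL [Hc [HdL Hlip]]].
  case: (near01_unif_vderive Hf1 (ka / 4)) => [|dA [HdA Happrox]]; first lra.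
  case: w_bounded => dW [W [W' [HdW [HW [HW' Hwb]]]]].
  have H1 : 0 < ka / (4 * W') by apply: Rdiv_lt_0_compat; lra.
  have H2 : 0 < c * dA / (4 * W) by apply: Rdiv_lt_0_compat; nra.
  apply: (filter_imp _ _ _ (filter_and _ _ (at_right_0_le Hd0) (filter_and _ _ (at_right_0_le HdL)
    (filter_and _ _ (at_right_0_le HdA) (filter_and _ _ (at_right_0_le HdW)
    (filter_and _ _ (at_right_0_le H1) (at_right_0_le H2))))))).
  move=> eps [[He He0] [[_ HeL] [[_ HeA] [[_ HeW] [[_ He1] [_ He2]]]]]] t u r r' Ht Hu Hr Hr' E.
  have Ediff i : f u i - f t i = eps * r * w t i - eps * r' * w u i.
    by have := f_equal (fun p => p i) E; rewrite /pushoff /=; lra.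
  have Hwt := Hwb t (near01_le dW Ht HeW); have Hwu := Hwb u (near01_le dW Hu HeW).
  have Hfar := Rle_trans _ _ _ (Hlip t u (near01_le dL Ht HeL) (near01_le dL Hu HeL))
    (pushoff_eq_base_close (Rlt_le _ _ He) Hr Hr' (proj1 Hwt) (proj1 Hwu) E).
  have Hclose : Rabs (u - t) < dA.
  { have : eps * W <= c * dA / (4 * W) * W by apply: Rmult_le_compat_r; lra.
    rewrite (_ : c * dA / (4 * W) * W = c * dA / 4); last by field; lra.
    by have := Rabs_pos (u - t); nra. }
  have Hlw i : Rabs (w u i - w t i) <= W' * Rabs (u - t).
    by apply: (near01_mvt_bound Hw1 (fun y Hy => proj2 (Hwb y Hy))); apply: near01_le; eauto.
  have HeW' : eps * W' <= ka / 4.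
  { have : eps * W' <= ka / (4 * W') * W' by apply: Rmult_le_compat_r; lra.
    by rewrite (_ : ka / (4 * W') * W' = ka / 4); [lra | field; lra]. }
  have Hsmall : vnorm (fun i => (u - t) * vderive f t i + - (eps * (r - r')) * w t i)
                <= ka / 2 * Rabs (u - t).
  { apply: vnorm_le => [|i]; first by have := Rabs_pos (u - t); nra.
    have Happ := Rle_trans _ _ _ (vnorm_ge _ i) (Happrox t u (near01_le dA Ht HeA) Hclose).
    have Hwi := Rabs_scal_le (Rlt_le _ _ He) Hr' (Hlw i).
    rewrite (_ : _ + _ = - (f u i - f t i - (u - t) * vderive f t i)
                         + - (eps * r' * (w u i - w t i))); last by rewrite Ediff; ring.
    have := Rabs_triang (- (f u i - f t i - (u - t) * vderive f t i)) (- (eps * r' * (w u i - w t i))).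
    by rewrite !Rabs_Ropp /=; have := Rabs_pos (u - t); nra. }
  case: (transverse_on_eq0 Hka Htr (near01_le d0 Ht He0) Hsmall) => Eut Er.
  split; [lra | nra].
Qed.

Lemma pushoff_regular_near :
  at_right 0 (fun eps => forall t r A B, near01 eps t -> 0 <= r <= 1 ->
    (forall i, A * vderive f t i + eps * (B * w t i + r * (A * vderive w t i)) = 0) ->
    A = 0 /\ B = 0).
Proof.
  case: w_bounded => dW [W [W' [HdW [HW [HW' Hwb]]]]].
  have H1 : 0 < ka / (4 * W') by apply: Rdiv_lt_0_compat; lra.
  apply: (filter_imp _ _ _ (filter_and _ _ (at_right_0_le Hd0)
           (filter_and _ _ (at_right_0_le HdW) (at_right_0_le H1)))).
  move=> eps [[He He0] [[_ HeW] [_ He1]]] t r A B Ht Hr Hzero.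
  have HeW' : eps * W' <= ka / 4.
  { have : eps * W' <= ka / (4 * W') * W' by apply: Rmult_le_compat_r; lra.
    by rewrite (_ : ka / (4 * W') * W' = ka / 4); [lra | field; lra]. }
  have Hsmall : vnorm (fun i => A * vderive f t i + (eps * B) * w t i) <= ka / 2 * Rabs A.
  { apply: vnorm_le => [|i]; first by have := Rabs_pos A; nra.
    rewrite (_ : _ + _ = - (eps * r * (A * vderive w t i))); last by have := Hzero i; lra.
    rewrite Rabs_Ropp; apply: Rle_trans (Rabs_scal_le (Rlt_le _ _ He) Hr _) _.
      rewrite Rabs_mult; apply: Rmult_le_compat_l; first exact: Rabs_pos.
      exact: Rle_trans (vnorm_ge _ i) (proj2 (Hwb t (near01_le dW Ht HeW))).
    by have := Rabs_pos A; nra. }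
  case: (transverse_on_eq0 Hka Htr (near01_le d0 Ht He0) Hsmall) => -> HB.
  split => //; nra.
Qed.

Lemma pushoff_in_open_near {O : Eucl n -> Prop} : open_Rn O -> (forall t, 0 <= t <= 1 -> O (f t)) ->
  at_right 0 (fun eps => forall t r, near01 eps t -> 0 <= r <= 1 -> O (pushoff eps r t)).
Proof.
  move=> HO HfO.
  case: (near01_tube_in_open (fun i x => Ck_continuous (Hf1 i) x) HO HfO) => d2 [Hd2 Htube].
  case: w_bounded => dW [W [W' [HdW [HW [HW' Hwb]]]]].
  have H1 : 0 < d2 / (2 * W) by apply: Rdiv_lt_0_compat; lra.
  apply: (filter_imp _ _ _ (filter_and _ _ (at_right_0_le Hd2)
           (filter_and _ _ (at_right_0_le HdW) (at_right_0_le H1)))).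
  move=> eps [[He He2] [[_ HeW] [_ He1]]] t r Ht Hr.
  apply: (Htube t (near01_le d2 Ht He2)).
  have : eps * W <= d2 / (2 * W) * W by apply: Rmult_le_compat_r; lra.
  rewrite (_ : d2 / (2 * W) * W = d2 / 2); last by field; lra.
  move=> HeW2; apply: (Rle_lt_trans _ (eps * W)); last lra.
  apply: vnorm_le => [|i]; first nra.
  rewrite /pushoff (_ : _ + _ - _ = eps * r * w t i); last ring.
  exact: Rabs_scal_le (Rlt_le _ _ He) Hr (Rle_trans _ _ _ (vnorm_ge _ i) (proj1 (Hwb t (near01_le dW Ht HeW)))).
Qed.

Lemma pushoff_loop_regular eps : 0 < eps ->
  (forall t r A B, near01 eps t -> 0 <= r <= 1 ->
    (forall i, A * vderive f t i + eps * (B * w t i + r * (A * vderive w t i)) = 0) ->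
    A = 0 /\ B = 0) ->
  forall th, deriv_nonzero (fun th => pushoff eps (lift (eps / 2) th) (sweep (eps / 2) th)) th.
Proof.
  move=> He Hreg th; apply: NNPP => Hn.
  have Hnear : near01 eps (sweep (eps / 2) th).
    by have := sweep_range (eps / 2) th ltac:(lra); rewrite /near01; lra.
  case: (Hreg (sweep (eps / 2) th) (lift (eps / 2) th)
    (- (1 / 2 + eps / 2) * (2 * PI) * sin (2 * PI * th))
    (Derive psi (sin (2 * PI * th) + eps / 2 / 2) * (2 * PI * cos (2 * PI * th)))
    Hnear (lift_range (eps / 2) th)).
  - move=> i; rewrite -(is_derive_unique _ _ _
      (is_derive_pushoff eps i (is_derive_sweep (eps / 2) th) (is_derive_lift (eps / 2) th))).
    by apply: NNPP => Hi; apply: Hn; exists i.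
  - by case: (sweep_lift_regular (eps / 2) th ltac:(lra)).
Qed.

Lemma pushoff_closed_curve (O : Eucl n -> Prop) :
  (forall t1 t2, 0 <= t1 <= 1 -> 0 <= t2 <= 1 -> f t1 = f t2 -> t1 = t2) ->
  (forall t, 0 <= t <= 1 -> deriv_nonzero f t) ->
  open_Rn O -> (forall t, 0 <= t <= 1 -> O (f t)) ->
  exists G, is_simple_closed_curve s G /\ (forall t, 0 <= t <= 1 -> G (f t)) /\ (forall p, G p -> O p).
Proof.
  move=> Hinj Hreg HO HfO.
  have [eps [[He He1] [Hinj' [Hreg' HO']]]] := Hierarchy.filter_ex _
    (filter_and _ _ (at_right_0_le Rlt_0_1) (filter_and _ _ (pushoff_injective_near Hinj Hreg)
       (filter_and _ _ pushoff_regular_near (pushoff_in_open_near HO HfO)))).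
  pose g th := pushoff eps (lift (eps / 2) th) (sweep (eps / 2) th).
  have Hnear th : near01 eps (sweep (eps / 2) th).
    by have := sweep_range (eps / 2) th ltac:(lra); rewrite /near01; lra.
  exists (fun p => exists th, p = g th); split; last split.
  - exists g; split; last split; last split; last split => //.
    + move=> i; apply/Cs_realE/pushoff_Cs; apply: Cs_smooth => k; [exact: sweep_Ck | exact: lift_Ck].
    + by move=> th; rewrite /g sweep_periodic lift_periodic.
    + move=> t1 t2 H1 H2 /Hinj' [] //; try exact: lift_range.
      by move=> Ea Eb; apply: (sweep_lift_inj (eps / 2)) => //; lra.
    + exact: pushoff_loop_regular.
  - move=> t Ht; case: (sweep_lift_cover (eps / 2) t ltac:(lra) Ht) => th [Ea Eb].
    by exists th; apply: functional_extensionality => i; rewrite /g /pushoff Ea Eb; ring.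
  - by move=> p [th ->]; apply: HO' => //; exact: lift_range.
Qed.

End Pushoff.

Arguments pushoff_closed_curve {s n f w ka d0} Hs Hf Hw Hka Hd0 Htr {O}.

Theorem lemma6p4 (s : smoothness) (n : nat) (L O : Eucl n -> Prop) :
  smooth_ge1 s -> (2 <= n)%nat ->
  is_arc s L -> nbhd_of O L ->
  exists G : Eucl n -> Prop,
    is_simple_closed_curve s G /\
    (forall p, L p -> G p) /\ (forall p, G p -> O p).
Proof.
  move=> Hs Hn [f [Hf [Hinj [Hreg HL]]]] [HO HLO].
  have {}Hf i : Cs s (fun t => f t i) by apply/Cs_realE/Hf.
  have [w [ka [d [Hw [Hka [Hd Htr]]]]]] : exists w ka d,
      (forall i, Cs s (fun t => w t i)) /\ 0 < ka /\ 0 < d /\ transverse_on f w ka d.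
    destruct n as [|[|[|n]]]; try lia.
    - exact: plane_transverse_field.
    - exact: higher_transverse_field.
  have HfO t : 0 <= t <= 1 -> O (f t) by move=> Ht; apply/HLO/HL; exists t.
  case: (pushoff_closed_curve Hs Hf Hw Hka Hd Htr Hinj Hreg HO HfO) => G [HG [HfG HGO]].
  by exists G; split => //; split => // p /HL [t [Ht ->]]; exact: HfG.
Qed.
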